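(* Let ${\mathcal M}$ be a $q$-matroid on $\mathbb{F}_q^n$ of rank $k$ with $0<k<n$. Then there is no nonzero vector $x\in\mathbb{F}_q^n$ that belongs to every basis of ${\mathcal M}$.
   Context: A $q$-matroid is a pair $(E,\rho)$, $E=\mathbb{F}_q^n$, with $\rho$ from the set of subspaces of $E$ to $\mathbb{Z}_{\ge0}$ satisfying $0\le\rho(X)\le\dim X$, $\rho(X)\le\rho(Y)$ for $X\subseteq Y$, and $\rho(X+Y)+\rho(X\cap Y)\le\rho(X)+\rho(Y)$; its rank is $\rho(E)$. A subspace $U$ is independent if $\rho(U)=\dim U$, and a basis is an independent subspace not strictly contained in any independent subspace. *)

From HB Require Import structures.
From mathcomp Require Import all_boot all_order all_algebra all_field.
Set Implicit Arguments. Unset Strict Implicit. Unset Printing Implicit Defensive.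
Import GRing.Theory.
Local Open Scope ring_scope.


Definition is_qmatroid (F : finFieldType) (n : nat)
    (rho : {vspace 'rV[F]_n} -> nat) : Prop :=
  [/\ (forall X : {vspace 'rV[F]_n}, (0 <= rho X <= \dim X)%N),
      (forall X Y : {vspace 'rV[F]_n}, (X <= Y)%VS -> (rho X <= rho Y)%N) &
      (forall X Y : {vspace 'rV[F]_n},
          (rho (X + Y)%VS + rho (X :&: Y)%VS <= rho X + rho Y)%N)].

Definition qm_rank (F : finFieldType) (n : nat)
    (rho : {vspace 'rV[F]_n} -> nat) : nat := rho fullv.

Definition qm_indep (F : finFieldType) (n : nat)
    (rho : {vspace 'rV[F]_n} -> nat) (U : {vspace 'rV[F]_n}) : Prop :=
  rho U = \dim U.

Definition qm_basis (F : finFieldType) (n : nat)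
    (rho : {vspace 'rV[F]_n} -> nat) (B : {vspace 'rV[F]_n}) : Prop :=
  qm_indep rho B /\
  ~ (exists V : {vspace 'rV[F]_n}, qm_indep rho V /\ (B <= V)%VS /\ B != V).

From HB Require Import structures.
From mathcomp Require Import all_boot all_order all_algebra all_field.
From mathcomp Require Import zify.
Import GRing.Theory.
Local Open Scope ring_scope.

Set Implicit Arguments.
Unset Strict Implicit.
Unset Printing Implicit Defensive.

(* Build a basis avoiding x by adding one line at a time.  Let V be
   independent with x \notin V and rho V < rho E.  By submodularity, V together
   with vectors y satisfying rho (V + <y>) = rho V spans a space of rank rho V,
   so not every vector is of this kind.  As the complement of the proper
   subspace S = V + <x> spans E (y = (y + z) - z for z \notin S), some y
   outside S has rho (V + <y>) > rho V.  Then V + <y> is independent, and it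
   still avoids x, since x \in V + <y> would force y \in V + <x>.  Once
   \dim V = rho E, V is a basis. *)

Section LineSum.
Variables (K : fieldType) (vT : vectType K).
Implicit Types (V : {vspace vT}) (x y : vT).

Lemma dimv_add_line_le V y : (\dim (V + <[y]>) <= (\dim V).+1)%N.
Proof.
rewrite -addn1 (leq_trans (dimv_add_leqif _ _)) // leq_add2l dim_vline.
by case: (y != 0).
Qed.

Lemma memv_add_line_exchange V x y :
  x \notin V -> x \in (V + <[y]>)%VS -> y \in (V + <[x]>)%VS.
Proof.
move=> xV /memv_addP[v vV [_ /vlineP[c ->] def_x]].
have c0 : c != 0 by apply: contraNneq xV => c0; rewrite def_x c0 scale0r addr0.
have -> : y = - c^-1 *: v + c^-1 *: x.
  by rewrite def_x scalerDr scalerA mulVf // scale1r scaleNr addKr.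
by rewrite memv_add ?memvZ ?memv_line.
Qed.

End LineSum.

Section RankFunction.
Variables (K : fieldType) (vT : vectType K) (rho : {vspace vT} -> nat).
Hypothesis rho_le_dim : forall X, (rho X <= \dim X)%N.
Hypothesis rho_mono : forall X Y, (X <= Y)%VS -> (rho X <= rho Y)%N.
Hypothesis rho_submod :
  forall X Y, (rho (X + Y)%VS + rho (X :&: Y)%VS <= rho X + rho Y)%N.
Implicit Types (V A B S : {vspace vT}) (x y : vT).

Lemma rank_addv_le V A B : (V <= A)%VS -> (V <= B)%VS ->
  (rho A <= rho V)%N -> (rho B <= rho V)%N -> (rho (A + B) <= rho V)%N.
Proof.
move=> VA VB rA rB.
have rV : (rho V <= rho (A :&: B))%N by apply: rho_mono; rewrite subv_cap VA VB.
have := rho_submod A B; lia.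
Qed.

Lemma rank_add_span_le V s :
  {in s, forall y, rho (V + <[y]>) <= rho V}%N -> (rho (V + <<s>>) <= rho V)%N.
Proof.
elim: s => [|y s IHs] rs; first by rewrite span_nil addv0.
have -> : (V + <<y :: s>> = (V + <[y]>) + (V + <<s>>))%VS.
  rewrite span_cons -addvA (addvA <[y]>%VS V) (addvC <[y]>%VS V).
  by rewrite -addvA (addvA V V) addvv.
apply: rank_addv_le; rewrite ?addvSl ?rs ?mem_head // IHs // => z zs.
by rewrite rs // inE zs orbT.
Qed.

Lemma rank_add_line_le V y : (rho (V + <[y]>) <= (rho V).+1)%N.
Proof.
have := rho_submod V <[y]>; have := rho_le_dim <[y]>; rewrite dim_vline.
by case: (y != 0) => /=; lia.
Qed.

Lemma exists_rank_increase V S : S != fullv -> (rho V < rho fullv)%N ->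
  exists2 y, y \notin S & (rho V < rho (V + <[y]>))%N.
Proof.
move=> S_proper rVf.
have [z _ zS] : exists2 z, z \in fullv & z \notin S.
  by apply/subvPn; apply: contra S_proper => fS; rewrite eqEsubv subvf.
have [b _ rb] : exists2 b, b \in vbasis fullv & (rho V < rho (V + <[b]>))%N.
  apply/hasP; apply: contraTT rVf => /hasPn rb; rewrite -leqNgt.
  rewrite -(addvf V) -(span_basis (vbasisP fullv)).
  by apply: rank_add_span_le => y /rb; rewrite -leqNgt.
case: (boolP (b \in S)) => bS; last by exists b.
(* Otherwise z and b + z lie outside S, and their span contains b. *)
case: (ltnP (rho V) (rho (V + <[z]>))) => rz; first by exists z.
case: (ltnP (rho V) (rho (V + <[b + z]>))) => rbz.
  by exists (b + z); rewrite ?rpredDl.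
suff: (rho (V + <[b]>) <= rho V)%N by rewrite leqNgt rb.
apply: leq_trans (rank_add_span_le (s := [:: b + z; z]) _).
  apply/rho_mono/addvS; rewrite ?subvv // -memvE.
  rewrite -[X in X \in _](addrK z b).
  by rewrite memvB ?memv_span ?mem_head ?inE ?eqxx ?orbT.
by move=> y; rewrite !inE => /orP[] /eqP ->.
Qed.

Lemma rank_add_line_indep V y : rho V = \dim V -> (rho V < rho (V + <[y]>))%N ->
  rho (V + <[y]>) = (\dim V).+1 /\ \dim (V + <[y]>) = (\dim V).+1.
Proof.
have := rank_add_line_le V y; have := rho_le_dim (V + <[y]>).
have := dimv_add_line_le V y; lia.
Qed.

Lemma exists_indep_avoiding x d : x != 0 ->
  (d <= rho fullv)%N -> (rho fullv < \dim {:vT})%N ->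
  exists V, [/\ rho V = \dim V, \dim V = d & x \notin V].
Proof.
move=> x0 + rank_lt; elim: d => [|d IHd] ltd.
  exists 0%VS; rewrite dimv0 memv0 x0; split=> //.
  by have := rho_le_dim 0%VS; rewrite dimv0 leqn0 => /eqP.
have [V [indV dimV xV]] := IHd (ltnW ltd).
have S_proper : (V + <[x]>)%VS != fullv.
  by apply/eqP => Sf; have := dimv_add_line_le V x; rewrite Sf; lia.
have [|y yS ry] := exists_rank_increase (V := V) S_proper.
  by rewrite indV dimV.
have [ryV dyV] := rank_add_line_indep indV ry.
exists (V + <[y]>)%VS; split; [by rewrite ryV dyV | by rewrite dyV dimV |].
by apply: contra yS; apply: memv_add_line_exchange.
Qed.

End RankFunction.

Lemma qm_basis_of_full_rank (F : finFieldType) (n : nat)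
    (rho : {vspace 'rV[F]_n} -> nat) (B : {vspace 'rV[F]_n}) :
  (forall X Y, (X <= Y)%VS -> (rho X <= rho Y)%N) ->
  qm_indep rho B -> (qm_rank rho <= \dim B)%N -> qm_basis rho B.
Proof.
move=> rho_mono indB rankB; split=> // -[W [indW [BW BneW]]].
have ltBW : (\dim B < \dim W)%N by rewrite (ltn_leqif (dimv_leqif_eq BW)) BneW.
have := rho_mono _ _ (subvf W); rewrite /qm_rank /qm_indep in rankB indB indW; lia.
Qed.

Theorem lemma5p4 (F : finFieldType) (n : nat)
    (rho : {vspace 'rV[F]_n} -> nat) (k : nat) :
  is_qmatroid rho -> qm_rank rho = k -> (0 < k)%N -> (k < n)%N ->
  ~ (exists x : 'rV[F]_n,
        x != 0 /\ (forall B : {vspace 'rV[F]_n}, qm_basis rho B -> x \in B)).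
Proof.
move=> [rho_dim rho_mono rho_submod] <- _ rank_lt [x [x0 x_in_bases]].
have rho_le_dim X : (rho X <= \dim X)%N by have /andP[] := rho_dim X.
have dim_full : \dim {:'rV[F]_n} = n by rewrite dimvf dim_matrix; exact: mul1n.
have [|B [indB dimB xB]] :=
  exists_indep_avoiding rho_le_dim rho_mono rho_submod x0 (leqnn _).
  by rewrite dim_full.
apply/negP: xB; rewrite negbK; apply: x_in_bases.
by apply: (qm_basis_of_full_rank rho_mono indB); rewrite dimB.
Qed.
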